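(* Let $E$ be any execution of Algorithm C (described in the context). The sequence of values taken by the max-register $\mathit{logNumIncrems}$ in $E$ has the following properties: (i) it begins at $-1$; (ii) it is increasing; (iii) for every integer $i>cln$, if $i$ appears in the sequence then so does $i-1$.
   Context: Shared objects are treated as atomic. An exact counter supports Increment and Read; a Read returns the number of preceding Increments. A max-register supports MaxWrite$(v)$ and MaxRead; a MaxRead returns the largest value among all preceding MaxWrites, or the initial value if there was none. Algorithm C has the following parameters: - $k\ge2$ an integer, $n$ the number of processes, $m$ a positive integer; - $cln=\lceil\log_k n\rceil$ and $N=k^{cln}$. Shared objects: - an array $\mathit{Bucket}[0..\max\{1,\lceil\log_k\lceil m/n\rceil\rceil+1\}-1]$ of exact counters, each initially $0$; - a max-register $\mathit{logNumIncrems}$ with initial value $-1$. Each process has local variables $\mathit{lcounter}=0$, $\mathit{index}=0$ and $\mathit{threshold}=1$. Increment(): - $\mathit{lcounter}\gets\mathit{lcounter}+1$. - If $\mathit{lcounter}=\mathit{threshold}$, then: - $\mathit{Bucket}[\mathit{index}]$.Increment(); - $\mathit{lcounter}\gets0$; - $val\gets\mathit{Bucket}[\mathit{index}]$.Read(); - if $\mathit{index}=0$ and $val<N$, then $\mathit{logNumIncrems}$.MaxWrite$(\lfloor\log_k val\rfloor)$; - if $val\ge N$, then: - $\mathit{logNumIncrems}$.MaxWrite$(cln+\mathit{index})$; - $\mathit{index}\gets\mathit{index}+1$; - if $\mathit{index}>1$, then $\mathit{threshold}\gets k\cdot\mathit{threshold}$; - if $\mathit{index}=1$, then $\mathit{threshold}\gets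 k-1$. Read(): - $r\gets\mathit{logNumIncrems}$.MaxRead(). - If $r\ge0$, return $k^{r+1}$; otherwise return $0$. *)

From mathcomp Require Import all_boot all_order all_algebra.
Set Implicit Arguments. Unset Strict Implicit. Unset Printing Implicit Defensive.
Import Order.TTheory GRing.Theory Num.Theory.

Definition cln (k n : nat) : nat := up_log k n.
Definition NN (k n : nat) : nat := k ^ cln k n.
Definition nbuckets (k n m : nat) : nat :=
  maxn 1 ((up_log k ((m + n.-1) %/ n)).+1).

Inductive pc : Type :=
| Idle
| AfterInc             (* Bucket[index].Increment done, about to Read it *)
| WriteLog of nat      (* about to MaxWrite(floor(log_k val)) *)
| WriteBig.            (* about to MaxWrite(cln+index), then update index/threshold *)

Record pstate := PS { lcounter : nat; index : nat; threshold : nat; pcv : pc }.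

Definition pinit : pstate := PS 0 0 1 Idle.

Record config (n : nat) := Cfg {
  bucket : nat -> nat;
  logNumIncrems : int;
  procs : 'I_n -> pstate }.

Definition cinit (n : nat) : config n :=
  Cfg (fun _ => 0%N) (-1)%R (fun _ => pinit).

Definition upd (n : nat) (f : 'I_n -> pstate) (i : 'I_n) (s : pstate) :=
  fun j => if j == i then s else f j.

Definition bincr (b : nat -> nat) (x : nat) := fun y => if y == x then (b y).+1 else b y.

Definition new_threshold (k idx thr : nat) : nat :=
  if (1 < idx)%N then k * thr else if idx == 1%N then k.-1 else thr.

(* One atomic step of process i (each step performs at most one access to a
   shared object; local computation is folded into the adjacent shared step).
   An access to Bucket outside its index range is undefined: no step. *)
Inductive step (k n m : nat) (C C' : config n) : Prop :=
| StRead (i : 'I_n) :                      (* Read(): one MaxRead, no state change *)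
    pcv (procs C i) = Idle -> C' = C -> @step k n m C C'
| StIncLocal (i : 'I_n) :
    let p := procs C i in
    pcv p = Idle -> (lcounter p).+1 != threshold p ->
    C' = Cfg (bucket C) (logNumIncrems C)
             (upd (procs C) i (PS (lcounter p).+1 (index p) (threshold p) Idle)) ->
    @step k n m C C'
| StIncBucket (i : 'I_n) :
    let p := procs C i in
    pcv p = Idle -> (lcounter p).+1 = threshold p -> (index p < nbuckets k n m)%N ->
    C' = Cfg (bincr (bucket C) (index p)) (logNumIncrems C)
             (upd (procs C) i (PS 0 (index p) (threshold p) AfterInc)) ->
    @step k n m C C'
| StReadBucket (i : 'I_n) :
    let p := procs C i in
    pcv p = AfterInc -> (index p < nbuckets k n m)%N ->
    let val := bucket C (index p) in
    let nxt := if (index p == 0%N) && (val < NN k n)%N then WriteLog val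
               else if (NN k n <= val)%N then WriteBig else Idle in
    C' = Cfg (bucket C) (logNumIncrems C)
             (upd (procs C) i (PS (lcounter p) (index p) (threshold p) nxt)) ->
    @step k n m C C'
| StWriteLog (i : 'I_n) (v : nat) :
    let p := procs C i in
    pcv p = WriteLog v ->
    C' = Cfg (bucket C) (Num.max (logNumIncrems C) (Posz (trunc_log k v)))
             (upd (procs C) i (PS (lcounter p) (index p) (threshold p) Idle)) ->
    @step k n m C C'
| StWriteBig (i : 'I_n) :
    let p := procs C i in
    pcv p = WriteBig ->
    C' = Cfg (bucket C) (Num.max (logNumIncrems C) (Posz (cln k n + index p)))
             (upd (procs C) i (PS (lcounter p) (index p).+1
                      (new_threshold k (index p).+1 (threshold p)) Idle)) ->
    @step k n m C C'.
Arguments step : clear implicits.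

(* An execution: an infinite sequence of configurations starting in the initial
   one, each obtained from the previous by a step or by stuttering (so finite
   executions are included, being extended by stuttering). *)
Definition execution (k n m : nat) (E : nat -> config n) : Prop :=
  E 0%N = cinit n /\ forall t, E t.+1 = E t \/ step k n m (E t) (E t.+1).
Arguments execution : clear implicits.

From Pilot Require Import Defs.
From mathcomp Require Import all_boot all_order all_algebra zify.
Import Order.TTheory GRing.Theory Num.Theory.
Local Open Scope ring_scope.
Set Implicit Arguments.

(** The register only changes through a MaxWrite that raises it to the written
    value.  A write of [floor(log_k val)] comes with [val < N], so it never
    exceeds [cln].  A write of [cln + index] by a process with [index >= 1]
    comes after that process's own write of [cln + index - 1], so the register
    is already at least [cln + index - 1] ([safe_config] below).  Hence every
    change to a value above [cln] is an increment by exactly one, and since the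
    register starts at [-1], every such value is preceded by its predecessor. *)

Lemma trunc_log_leq_expn (p e v : nat) :
  (1 < p)%N -> (v <= p ^ e)%N -> (trunc_log p v <= e)%N.
Proof. by move=> p_gt1 /(leq_trunc_log p); rewrite trunc_expnK. Qed.

Lemma max_changedE (r a : int) : Num.max r a != r -> r < a /\ Num.max r a = a.
Proof. by case: leP => [_|]; rewrite ?eqxx. Qed.

Lemma attained_predecessor (f : nat -> int) (P : pred int) :
    ~~ P (f 0%N) -> (forall t, f t.+1 != f t -> P (f t.+1) -> f t = f t.+1 - 1) ->
  forall t, P (f t) -> exists s, f s = f t - 1.
Proof.
move=> P0 fS; elim=> [|t IH] Pt; first by rewrite Pt in P0.
have [e|ne] := eqVneq (f t.+1) (f t); last by exists t; apply: fS.
by rewrite e in Pt *; apply: IH.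
Qed.

Section AlgorithmC.
Variables k n m : nat.
Hypothesis k_gt1 : (1 < k)%N.

Notation reg C := (logNumIncrems C).

Definition safe_config (C : config n) : Prop :=
  (forall j, (0 < Defs.index (procs C j))%N ->
     Posz (cln k n + Defs.index (procs C j)) <= reg C + 1)
  /\ (forall j v, pcv (procs C j) = WriteLog v -> (v < NN k n)%N).

Lemma step_reg_nondecr (C C' : config n) : step k n m C C' -> reg C <= reg C'.
Proof. by case=> *; subst C' => //=; rewrite le_max lexx. Qed.

Lemma safe_cinit : safe_config (cinit n).
Proof. by split. Qed.

Lemma safe_step (C C' : config n) :
  safe_config C -> step k n m C C' -> safe_config C'.
Proof.
move=> [reg_ge w_lt] st.
have other j : (0 < Defs.index (procs C j))%N ->
    Posz (cln k n + Defs.index (procs C j)) <= reg C' + 1.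
  by move=> /reg_ge /le_trans; apply; rewrite lerD2r; apply: step_reg_nondecr st.
case: st other
  => [i _ ->| i p _ _ ->| i p _ _ _ ->| i p _ _ val nxt ->| i v p _ ->| i p _ ->] //=
  => other; split=> j /=; rewrite /upd; case: eqP => [ji|_]; try subst j; rewrite /=.
all: try solve [by [] | exact: reg_ge | exact: w_lt | exact: other].
- by rewrite /nxt /val; case: ifP => [/andP[_ lt_val] _ [<-] //|_]; case: ifP.
- by move=> _; rewrite addnS -addn1 PoszD lerD2r le_max lexx orbT.
Qed.

Lemma step_reg_above_cln (C C' : config n) :
  safe_config C -> step k n m C C' -> reg C' != reg C -> Posz (cln k n) < reg C' ->
  reg C = reg C' - 1.
Proof.
move=> [reg_ge w_lt] st.
case: st => [i _ ->| i p _ _ ->| i p _ _ _ ->| i p _ _ val nxt ->| i v p wv ->| i p _ ->] /=;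
  rewrite ?eqxx // => /max_changedE[reg_lt ->].
- have := @trunc_log_leq_expn _ (cln k n) _ k_gt1 (ltnW (w_lt i v wv)); lia.
- move=> cln_lt; have := reg_ge i; rewrite -/p; lia.
Qed.

End AlgorithmC.

Theorem lemma15 (k n m : nat) (hk : (2 <= k)%N) (hn : (0 < n)%N) (hm : (0 < m)%N)
    (E : nat -> config n) (hE : execution k n m E) :
  logNumIncrems (E 0%N) = -1
  /\ (forall t1 t2 : nat, (t1 <= t2)%N -> logNumIncrems (E t1) <= logNumIncrems (E t2))
  /\ (forall i : int, (Posz (cln k n) < i) ->
        (exists t, logNumIncrems (E t) = i) ->
        exists t, logNumIncrems (E t) = i - 1).
Proof.
case: hE => E0 E_step.
have reg_nondecr t : logNumIncrems (E t) <= logNumIncrems (E t.+1).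
  by case: (E_step t) => [->|/step_reg_nondecr].
have safe t : safe_config k (E t).
  elim: t => [|t IH]; first by rewrite E0; apply: safe_cinit.
  by case: (E_step t) => [->|/(safe_step IH)].
split; first by rewrite E0.
split; first exact: homo_leq le_refl le_trans reg_nondecr.
move=> _ /[swap] -[t <-] cln_lt.
apply: (attained_predecessor (fun t => logNumIncrems (E t))
                     [pred x | Posz (cln k n) < x] _ _ t cln_lt) => [|s ne].
  by rewrite /= E0.
case: (E_step s) ne => [-> | st ne]; first by rewrite eqxx.
exact: (step_reg_above_cln hk (safe s) st ne).
Qed.
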